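(* Assume the standing setting below, fix $\nu_1,\nu_2,\nu_3\in(0,\infty)$, $0<\alpha_{\max}<\infty$, and let $\bar{\mathcal{R}}(c,s)=\mathcal{R}_c(c)+\nu_1\mathcal{R}_s(s)+\frac{\nu_2}{2}\|s-s_{\mathrm{mod}}\|^2+\frac{\nu_3}{2}\|P(s)-s_{\mathrm{calib}}\|^2$. Let $(c^\ast,s^\ast)$ be an $\bar{\mathcal{R}}$-minimizing solution (a minimizer of $\bar{\mathcal{R}}$ over $\{(c,s):B(c,s)=u^\ast\}$), $u^\ast=B(c^\ast,s^\ast)$, and $u_\delta\in Z$ with $\|u^\ast-u_\delta\|\le\delta$. For $0<\alpha\le\alpha_{\max}$ let $(c^\alpha,s^\alpha)$ be a minimizer of $J^{u_\delta}_{\alpha,\nu_1\alpha,\nu_2\alpha,\nu_3\alpha}$. Suppose that there exist $\kappa_1\in[0,1)$, $\kappa_2\ge0$ and $\xi^\ast=(\xi_{c^\ast},\xi_{s^\ast})\in\partial\bar{\mathcal{R}}(c^\ast,s^\ast)$ such that, for all $(\delta,\alpha)$ considered, $$\langle\xi^\ast,(c^\ast-c,s^\ast-s)\rangle\le\kappa_1D^{\xi^\ast}_{\bar{\mathcal{R}}}((c,s),(c^\ast,s^\ast))+\kappa_2\|B(c,s)-B(c^\ast,s^\ast)\|$$ for all $(c,s)$ with $J^{u_\delta}_{\alpha_{\max},\alpha_{\max}\nu_1,\alpha_{\max}\nu_2,\alpha_{\max}\nu_3}(c,s)\le M$, where $M>\alpha_{\max}(\bar{\mathcal{R}}(c^\ast,s^\ast)+\delta^2/\alpha)$.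 If $\alpha\sim\delta$ (i.e., $m\delta\le\alpha\le M'\delta$ for constants $0<m\le M'$), then as $\delta\to0$ $$D^{\xi^\ast}_{\bar{\mathcal{R}}}((c^\alpha,s^\alpha),(c^\ast,s^\ast))=\mathcal{O}(\delta),\qquad\|B(c^\alpha,s^\alpha)-B(c^\ast,s^\ast)\|=\mathcal{O}(\delta).$$
   Context: Standing setting: $X,Y,Z$ are Hilbert spaces; $X\times Y$ carries the inner product $\langle (c_1,s_1),(c_2,s_2)\rangle=\langle c_1,c_2\rangle_X+\langle s_1,s_2\rangle_Y$. $B:X\times Y\to Z$ is bilinear, satisfies $\|B(c,s)\|_Z\le C\|c\|_X\|s\|_Y$ for some $C>0$, and is sequentially weak-weak continuous. $Y_n\subset Y$ is a finite-dimensional subspace, $P:Y\to Y_n$ is linear and bounded, $s_{\mathrm{calib}}\in Y_n$, $s_{\mathrm{mod}}\in Y$. $\mathcal{R}_c:X\to[0,\infty)$ and $\mathcal{R}_s:Y\to[0,\infty)$ are proper, convex and weakly lower semi-continuous. For $u\in Z$: $J^{u}_{\alpha,\beta,\gamma,\mu}(c,s)=\frac12\|B(c,s)-u\|^2+\frac{\gamma}{2}\|s-s_{\mathrm{mod}}\|^2+\frac{\mu}{2}\|P(s)-s_{\mathrm{calib}}\|^2+\alpha\mathcal{R}_c(c)+\beta\mathcal{R}_s(s)$. For a convex functional $\mathcal{R}$ and $\xi\in\partial\mathcal{R}(x^\ast)$, the Bregman distance is $D^{\xi}_{\mathcal{R}}(x,x^\ast)=\mathcal{R}(x)-\mathcal{R}(x^\ast)-\langle\xi,x-x^\ast\rangle$.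 *)

From HB Require Import structures.
From mathcomp Require Import all_boot all_order all_algebra.
From mathcomp Require Import all_classical all_reals all_analysis.
Set Implicit Arguments. Unset Strict Implicit. Unset Printing Implicit Defensive.
Import Order.TTheory GRing.Theory Num.Theory.
Import numFieldNormedType.Exports.
Local Open Scope classical_set_scope.
Local Open Scope ring_scope.

Section Defs.
Variable R : realType.

Definition ipnorm (V : lmodType R) (ip : V -> V -> R) (x : V) : R :=
  Num.sqrt (ip x x).

Definition hilbert (V : lmodType R) (ip : V -> V -> R) : Prop :=
  [/\ (forall x y, ip x y = ip y x),
      (forall a x y z, ip (a *: x + y) z = a * ip x z + ip y z),
      (forall x, 0 <= ip x x),
      (forall x, ip x x = 0 -> x = 0) &
      (forall u : nat -> V,
        (forall e : R, 0 < e -> exists N : nat, forall m n : nat,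
            (N <= m)%N -> (N <= n)%N -> ipnorm ip (u m - u n) < e) ->
        exists x : V, (fun n => ipnorm ip (u n - x)) @ \oo --> (0 : R))].

Definition weak_cvg (V : lmodType R) (ip : V -> V -> R) (u : nat -> V) (x : V)
  : Prop := forall y : V, (fun n => ip (u n) y) @ \oo --> ip x y.

Definition prod_ip (X Y : lmodType R) (ipX : X -> X -> R) (ipY : Y -> Y -> R)
  (p q : (X * Y)%type) : R := ipX p.1 q.1 + ipY p.2 q.2.

Definition convex_fun (V : lmodType R) (F : V -> R) : Prop :=
  forall (x y : V) (t : R), 0 <= t -> t <= 1 ->
    F (t *: x + (1 - t) *: y) <= t * F x + (1 - t) * F y.

Definition weakly_lsc (V : lmodType R) (ip : V -> V -> R) (F : V -> R) : Prop :=
  forall (u : nat -> V) (x : V), weak_cvg ip u x ->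
    forall e : R, 0 < e -> exists N : nat, forall n : nat, (N <= n)%N ->
      F x - e < F (u n).

Definition subgrad (V : lmodType R) (ip : V -> V -> R) (F : V -> R) (x xi : V)
  : Prop := forall y : V, F x + ip xi (y - x) <= F y.

Definition bregman (V : lmodType R) (ip : V -> V -> R) (F : V -> R) (xi y x : V)
  : R := F y - F x - ip xi (y - x).

Definition findim_subspace (V : lmodType R) (W : set V) : Prop :=
  exists (k : nat) (e : 'I_k -> V),
    forall y : V, W y <-> exists a : 'I_k -> R, y = \sum_(i < k) a i *: e i.

Definition Jfun (X Y Z : lmodType R) (ipY : Y -> Y -> R) (ipZ : Z -> Z -> R)
  (B : X -> Y -> Z) (P : Y -> Y) (s_calib s_mod : Y)
  (Rc : X -> R) (Rs : Y -> R) (u : Z) (alpha beta gamma mu : R)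
  (p : (X * Y)%type) : R :=
  2^-1 * ipnorm ipZ (B p.1 p.2 - u) ^+ 2
  + gamma / 2 * ipnorm ipY (p.2 - s_mod) ^+ 2
  + mu / 2 * ipnorm ipY (P p.2 - s_calib) ^+ 2
  + alpha * Rc p.1 + beta * Rs p.2.

Definition Rbar (X Y : lmodType R) (ipY : Y -> Y -> R)
  (P : Y -> Y) (s_calib s_mod : Y) (Rc : X -> R) (Rs : Y -> R)
  (nu1 nu2 nu3 : R) (p : (X * Y)%type) : R :=
  Rc p.1 + nu1 * Rs p.2 + nu2 / 2 * ipnorm ipY (p.2 - s_mod) ^+ 2
  + nu3 / 2 * ipnorm ipY (P p.2 - s_calib) ^+ 2.

End Defs.

From HB Require Import structures.
From mathcomp Require Import all_boot all_order all_algebra.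
From mathcomp Require Import all_classical all_reals all_analysis.
Import Order.TTheory GRing.Theory Num.Theory.
Import numFieldNormedType.Exports.
Local Open Scope classical_set_scope.
Local Open Scope ring_scope.
From mathcomp Require Import lra ring.

(* Writing x = (c, s), the functional J with weights (alpha, nu1 alpha,
   nu2 alpha, nu3 alpha) is the Tikhonov functional
   T_alpha(x) = 1/2 ||B x - u||^2 + alpha Rbar(x) (Jfun_tikhonov).
   At a fixed noise level delta, comparing the minimizer x_alpha with the
   exact solution xs gives T_alpha(x_alpha) <= delta^2/2 + alpha Rbar(xs);
   this places x_alpha in the sublevel set where the source condition holds
   (tikhonov_level_bound), and combining the two inequalities with
   ||B x_alpha - B xs||^2 <= 2 ||B x_alpha - u||^2 + 2 delta^2 yields the
   master inequality r^2/4 + alpha (1 - kappa1) D <= delta^2 + alpha kappa2 r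
   for the residual r and the Bregman distance D (fixed_level_estimate).
   With m delta <= alpha <= M' delta this real inequality forces
   r = O(delta) (quadratic_residual_bound) and then D = O(delta)
   (bregman_rate), with constants independent of delta (master_rates);
   the theorem follows by instantiating these lemmas at each delta. *)

Section InnerProduct.
Variables (R : realType) (V : lmodType R) (ip : V -> V -> R).
Hypothesis ip_sym : forall x y, ip x y = ip y x.
Hypothesis ip_lin : forall a x y z, ip (a *: x + y) z = a * ip x z + ip y z.

Lemma ipDl x y z : ip (x + y) z = ip x z + ip y z.
Proof. by have := ip_lin 1 x y z; rewrite scale1r mul1r. Qed.

Lemma ip0l z : ip 0 z = 0.
Proof. by apply: (addrI (ip 0 z)); rewrite -ipDl !addr0. Qed.

Lemma ipNl x z : ip (- x) z = - ip x z.
Proof. by apply: (addrI (ip x z)); rewrite -ipDl !subrr ip0l. Qed.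

Lemma ipNr x z : ip z (- x) = - ip z x.
Proof. by rewrite ip_sym ipNl ip_sym. Qed.

Lemma ip_sub_le x y : 0 <= ip (x + y) (x + y) ->
  ip (x - y) (x - y) <= 2 * ip x x + 2 * ip y y.
Proof.
have ipDr a b c : ip c (a + b) = ip c a + ip c b by rewrite ip_sym ipDl !(ip_sym c).
rewrite !ipDl !ipDr !ipNl !ipNr (ip_sym y x) => h; lra.
Qed.
End InnerProduct.

Lemma ipnorm_sq {R : realType} {V : lmodType R} (ip : V -> V -> R) x :
  0 <= ip x x -> ipnorm ip x ^+ 2 = ip x x.
Proof. by move=> h; rewrite /ipnorm sqr_sqrtr. Qed.

Lemma ipnorm_sub_sq {R : realType} {V : lmodType R} (ip : V -> V -> R) :
  (forall x y, ip x y = ip y x) ->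
  (forall a x y z, ip (a *: x + y) z = a * ip x z + ip y z) ->
  (forall x, 0 <= ip x x) -> forall x y,
  ipnorm ip (x - y) ^+ 2 <= 2 * ipnorm ip x ^+ 2 + 2 * ipnorm ip y ^+ 2.
Proof. by move=> hs hl hp x y; rewrite !ipnorm_sq //; exact: ip_sub_le. Qed.

Lemma prod_ip_sym {R : realType} {X Y : lmodType R}
    {ipX : X -> X -> R} {ipY : Y -> Y -> R} :
  (forall x y, ipX x y = ipX y x) -> (forall x y, ipY x y = ipY y x) ->
  forall p q, prod_ip ipX ipY p q = prod_ip ipX ipY q p.
Proof. by move=> sX sY p q; rewrite /prod_ip sX sY. Qed.

Lemma prod_ip_lin {R : realType} {X Y : lmodType R}
    {ipX : X -> X -> R} {ipY : Y -> Y -> R} :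
  (forall a x y z, ipX (a *: x + y) z = a * ipX x z + ipX y z) ->
  (forall a x y z, ipY (a *: x + y) z = a * ipY x z + ipY y z) ->
  forall a p q r, prod_ip ipX ipY (a *: p + q) r
                  = a * prod_ip ipX ipY p r + prod_ip ipX ipY q r.
Proof. by move=> lX lY a p q r; rewrite /prod_ip /= lX lY; ring. Qed.

Lemma bregman_ge0 {R : realType} {V : lmodType R} {ip : V -> V -> R}
    {F : V -> R} {x xi : V} (y : V) :
  subgrad ip F x xi -> 0 <= bregman ip F xi y x.
Proof. by move=> /(_ y); rewrite /bregman => h; lra. Qed.

Definition tikhonov {R : realType} {V Z : lmodType R} (ipZ : Z -> Z -> R)
  (F : V -> Z) (Rb : V -> R) (u : Z) (al : R) (p : V) : R :=
  2^-1 * ipnorm ipZ (F p - u) ^+ 2 + al * Rb p.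

Lemma Jfun_tikhonov {R : realType} {X Y Z : lmodType R}
    (ipY : Y -> Y -> R) (ipZ : Z -> Z -> R) (B : X -> Y -> Z) (P : Y -> Y)
    (s_calib s_mod : Y) (Rc : X -> R) (Rs : Y -> R) (nu1 nu2 nu3 : R)
    (u : Z) (al : R) (p : X * Y) :
  Jfun ipY ipZ B P s_calib s_mod Rc Rs u al (nu1 * al) (nu2 * al) (nu3 * al) p
  = tikhonov ipZ (fun q : X * Y => B q.1 q.2)
      (Rbar ipY P s_calib s_mod Rc Rs nu1 nu2 nu3) u al p.
Proof. by rewrite /Jfun /tikhonov /Rbar; ring. Qed.

(* If a point with data term e >= 0 and penalty x beats, at level a, a
   reference point with data term w <= d^2 and penalty y, then its value at
   any larger level amax is at most amax (y + d^2 / a). *)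
Lemma tikhonov_level_bound {R : realType} (a amax d e w x y : R) :
  0 < a <= amax -> 0 <= e -> w <= d ^+ 2 -> e + a * x <= w + a * y ->
  e + amax * x <= amax * (y + d ^+ 2 / a).
Proof.
move=> /andP[a0 aM] e0 wd hmin.
set q := d ^+ 2 / a.
have hq : d ^+ 2 = a * q by rewrite /q mulrC divfK ?lt0r_neq0.
have hx : x <= y + q by rewrite -(ler_pM2l a0); nra.
have : 0 <= (amax - a) * (y + q - x) by apply: mulr_ge0; lra.
nra.
Qed.

Section FixedNoiseLevel.
Context {R : realType} {V Z : lmodType R} {ipV : V -> V -> R} {ipZ : Z -> Z -> R}.
Hypothesis ipV_sym : forall x y, ipV x y = ipV y x.
Hypothesis ipV_lin : forall a x y z, ipV (a *: x + y) z = a * ipV x z + ipV y z.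
Hypothesis ipZ_sym : forall x y, ipZ x y = ipZ y x.
Hypothesis ipZ_lin : forall a x y z, ipZ (a *: x + y) z = a * ipZ x z + ipZ y z.
Hypothesis ipZ_pos : forall x, 0 <= ipZ x x.

Context {F : V -> Z} {Rb : V -> R} {xs xi xa : V} {u : Z}.
Context {a amax d kappa1 kappa2 M : R}.
Let T := tikhonov ipZ F Rb u.

Hypothesis hxi : subgrad ipV Rb xs xi.
Hypothesis ha : 0 < a <= amax.
Hypothesis hnoise : ipnorm ipZ (F xs - u) <= d.
Hypothesis hxa : forall p, T a xa <= T a p.
Hypothesis hM : amax * (Rb xs + d ^+ 2 / a) < M.
Hypothesis hsource : forall p, T amax p <= M ->
  ipV xi (xs - p) <= kappa1 * bregman ipV Rb xi p xs
                     + kappa2 * ipnorm ipZ (F p - F xs).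

Lemma noise_sq : ipnorm ipZ (F xs - u) ^+ 2 <= d ^+ 2.
Proof. by rewrite ler_pXn2r // ?nnegrE ?(le_trans _ hnoise) // sqrtr_ge0. Qed.

Lemma minimizer_in_sublevel : T amax xa <= M.
Proof.
apply/ltW/(le_lt_trans _ hM); apply: tikhonov_level_bound ha _ _ (hxa xs).
- by rewrite mulr_ge0 // sqr_ge0.
- by have := noise_sq; have := sqr_ge0 (ipnorm ipZ (F xs - u)); lra.
Qed.

Lemma fixed_level_estimate :
  0 <= bregman ipV Rb xi xa xs /\
  ipnorm ipZ (F xa - F xs) ^+ 2 / 4 + a * (1 - kappa1) * bregman ipV Rb xi xa xs
  <= d ^+ 2 + a * kappa2 * ipnorm ipZ (F xa - F xs).
Proof.
have D0 := bregman_ge0 xa hxi; split => //.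
have hsrc := hsource _ minimizer_in_sublevel.
rewrite -[xs - xa]opprB ipNr // in hsrc.
have hres : ipnorm ipZ (F xa - F xs) ^+ 2
    <= 2 * ipnorm ipZ (F xa - u) ^+ 2 + 2 * ipnorm ipZ (F xs - u) ^+ 2.
  have -> : F xa - F xs = (F xa - u) - (F xs - u) by rewrite opprB addrA subrK.
  exact: ipnorm_sub_sq.
have hw := noise_sq; have ha0 : 0 < a by case/andP: ha.
have hcmp : a * - ipV xi (xa - xs)
    <= a * (kappa1 * bregman ipV Rb xi xa xs + kappa2 * ipnorm ipZ (F xa - F xs)).
  by rewrite ler_pM2l.
have := hxa xs; rewrite /T /tikhonov /bregman in hcmp D0 *.
nra.
Qed.
End FixedNoiseLevel.

Lemma quadratic_residual_bound {R : realType} (d r b : R) :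
  0 < d -> 0 <= r -> 0 <= b -> r ^+ 2 / 4 <= d ^+ 2 + b * d * r ->
  r <= (4 + 4 * b) * d.
Proof.
move=> d0 r0 b0 h; rewrite leNgt; apply/negP => hr.
have hrr : (4 + 4 * b) * d * r < r * r by rewrite ltr_pM2r //; apply: le_lt_trans hr; nra.
nra.
Qed.

Lemma bregman_rate {R : realType} (a d m k c D : R) :
  0 < d -> 0 < m -> m * d <= a -> k < 1 ->
  a * (1 - k) * D <= d ^+ 2 + a * c * d ->
  D <= (m^-1 + c) / (1 - k) * d.
Proof.
move=> d0 m0 ma k1 h.
have a0 : 0 < a by apply: lt_le_trans ma; apply: mulr_gt0.
have hd2 : d ^+ 2 <= a * (m^-1 * d).
  have -> : d ^+ 2 = m^-1 * (m * d * d) by rewrite !mulrA mulVf ?mul1r ?lt0r_neq0.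
  by rewrite mulrCA ler_wpM2r // mulr_ge0 // ?invr_ge0 ltW.
have h1 : (1 - k) * D <= m^-1 * d + c * d.
  by rewrite -(ler_pM2l a0) mulrDr mulrA; nra.
by rewrite mulrAC ler_pdivlMr; lra.
Qed.


Definition residual_const {R : realType} (M' kappa2 : R) : R := 4 + 4 * (M' * kappa2).

Definition rate_const {R : realType} (m M' kappa1 kappa2 : R) : R :=
  residual_const M' kappa2 + (m^-1 + kappa2 * residual_const M' kappa2) / (1 - kappa1).

Lemma master_rates {R : realType} (m M' kappa1 kappa2 a d r D : R) :
  0 < d -> 0 < m -> m * d <= a <= M' * d -> 0 <= kappa1 < 1 -> 0 <= kappa2 ->
  0 <= r -> 0 <= D ->
  r ^+ 2 / 4 + a * (1 - kappa1) * D <= d ^+ 2 + a * kappa2 * r ->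
  `|D| <= rate_const m M' kappa1 kappa2 * d /\ r <= rate_const m M' kappa1 kappa2 * d.
Proof.
move=> d0 m0 /andP[ma aM'] /andP[k10 k11] k20 r0 D0 master.
have a0 : 0 < a by apply: lt_le_trans ma; apply: mulr_gt0.
have M'0 : 0 <= M' by nra.
set K := residual_const M' kappa2.
set C2 := (m^-1 + kappa2 * K) / (1 - kappa1).
have K0 : 0 <= K by rewrite /K /residual_const; nra.
have C20 : 0 <= C2.
  by apply: divr_ge0; [rewrite addr_ge0 ?mulr_ge0 // invr_ge0 ltW | lra].
have hr : r <= K * d.
  apply: quadratic_residual_bound; rewrite ?mulr_ge0 //.
  have : a * kappa2 * r <= M' * kappa2 * d * r.
    by rewrite ler_wpM2r // [M' * _ * _]mulrAC ler_wpM2r.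
  have : 0 <= a * (1 - kappa1) * D by apply: mulr_ge0 => //; apply: mulr_ge0; lra.
  lra.
have hD : D <= C2 * d.
  apply: bregman_rate d0 m0 ma k11 _.
  have : a * kappa2 * r <= a * (kappa2 * K) * d.
    by rewrite -!mulrA; apply: ler_wpM2l; [exact: ltW | exact: ler_wpM2l].
  have : 0 <= r ^+ 2 / 4 by rewrite divr_ge0 ?sqr_ge0.
  lra.
rewrite ger0_norm // /rate_const -/K -/C2; split.
- by apply: le_trans hD _; apply: ler_wpM2r; lra.
- by apply: le_trans hr _; apply: ler_wpM2r; lra.
Qed.

Theorem mainTheorem5 (R : realType) (X Y Z : lmodType R)
  (ipX : X -> X -> R) (ipY : Y -> Y -> R) (ipZ : Z -> Z -> R)
  (hX : hilbert ipX) (hY : hilbert ipY) (hZ : hilbert ipZ)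
  (B : X -> Y -> Z)
  (hBl : forall (a : R) (c1 c2 : X) (s : Y), B (a *: c1 + c2) s = a *: B c1 s + B c2 s)
  (hBr : forall (a : R) (c : X) (s1 s2 : Y), B c (a *: s1 + s2) = a *: B c s1 + B c s2)
  (hBbd : exists C : R, 0 < C /\ forall c s,
      ipnorm ipZ (B c s) <= C * ipnorm ipX c * ipnorm ipY s)
  (hBweak : forall (cn : nat -> X) (sn : nat -> Y) (c : X) (s : Y),
      weak_cvg ipX cn c -> weak_cvg ipY sn s ->
      weak_cvg ipZ (fun n => B (cn n) (sn n)) (B c s))
  (Yn : set Y) (hYn : findim_subspace Yn)
  (P : Y -> Y)
  (hPlin : forall (a : R) (y1 y2 : Y), P (a *: y1 + y2) = a *: P y1 + P y2)
  (hPbd : exists K : R, forall y, ipnorm ipY (P y) <= K * ipnorm ipY y)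
  (hPim : forall y, Yn (P y))
  (s_calib s_mod : Y) (hcalib : Yn s_calib)
  (Rc : X -> R) (Rs : Y -> R)
  (hRc0 : forall c, 0 <= Rc c) (hRs0 : forall s, 0 <= Rs s)
  (hRcconv : convex_fun Rc) (hRsconv : convex_fun Rs)
  (hRclsc : weakly_lsc ipX Rc) (hRslsc : weakly_lsc ipY Rs)
  (nu1 nu2 nu3 alpha_max : R)
  (hnu1 : 0 < nu1) (hnu2 : 0 < nu2) (hnu3 : 0 < nu3) (hamax : 0 < alpha_max)
  (cs : X) (ss : Y)
  (hmin : forall (c : X) (s : Y), B c s = B cs ss ->
      Rbar ipY P s_calib s_mod Rc Rs nu1 nu2 nu3 (cs, ss)
      <= Rbar ipY P s_calib s_mod Rc Rs nu1 nu2 nu3 (c, s))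
  (delta0 : R) (hdelta0 : 0 < delta0)
  (u : R -> Z) (alpha : R -> R) (ca : R -> X) (sa : R -> Y)
  (hu : forall delta, 0 < delta <= delta0 ->
      ipnorm ipZ (B cs ss - u delta) <= delta)
  (halpha : forall delta, 0 < delta <= delta0 -> 0 < alpha delta <= alpha_max)
  (hcsa : forall delta, 0 < delta <= delta0 -> forall (c : X) (s : Y),
      Jfun ipY ipZ B P s_calib s_mod Rc Rs (u delta) (alpha delta)
        (nu1 * alpha delta) (nu2 * alpha delta) (nu3 * alpha delta) (ca delta, sa delta)
      <= Jfun ipY ipZ B P s_calib s_mod Rc Rs (u delta) (alpha delta)
        (nu1 * alpha delta) (nu2 * alpha delta) (nu3 * alpha delta) (c, s))
  (kappa1 kappa2 : R) (xic : X) (xis : Y) (M : R)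
  (hk1 : 0 <= kappa1 < 1) (hk2 : 0 <= kappa2)
  (hxi : subgrad (prod_ip ipX ipY)
      (Rbar ipY P s_calib s_mod Rc Rs nu1 nu2 nu3) (cs, ss) (xic, xis))
  (hM : forall delta, 0 < delta <= delta0 ->
      alpha_max * (Rbar ipY P s_calib s_mod Rc Rs nu1 nu2 nu3 (cs, ss)
                   + delta ^+ 2 / alpha delta) < M)
  (hsource : forall delta, 0 < delta <= delta0 -> forall (c : X) (s : Y),
      Jfun ipY ipZ B P s_calib s_mod Rc Rs (u delta) alpha_max
        (alpha_max * nu1) (alpha_max * nu2) (alpha_max * nu3) (c, s) <= M ->
      prod_ip ipX ipY (xic, xis) (cs - c, ss - s)
      <= kappa1 * bregman (prod_ip ipX ipY)
                    (Rbar ipY P s_calib s_mod Rc Rs nu1 nu2 nu3) (xic, xis) (c, s) (cs, ss)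
         + kappa2 * ipnorm ipZ (B c s - B cs ss))
  (m M' : R) (hm : 0 < m) (hmM : m <= M')
  (hasim : forall delta, 0 < delta <= delta0 ->
      m * delta <= alpha delta <= M' * delta) :
  exists (C delta1 : R), 0 < delta1 /\
    forall delta, 0 < delta < delta1 ->
      `| bregman (prod_ip ipX ipY) (Rbar ipY P s_calib s_mod Rc Rs nu1 nu2 nu3)
           (xic, xis) (ca delta, sa delta) (cs, ss) | <= C * delta
      /\ ipnorm ipZ (B (ca delta) (sa delta) - B cs ss) <= C * delta.
Proof.
case: hX => sX lX _ _ _; case: hY => sY lY _ _ _; case: hZ => sZ lZ pZ _ _.
exists (rate_const m M' kappa1 kappa2), delta0; split => // delta /andP[d0 d1].
have hd : 0 < delta <= delta0 by rewrite d0 ltW.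
set Rb := Rbar ipY P s_calib s_mod Rc Rs nu1 nu2 nu3.
set F := fun p : X * Y => B p.1 p.2.
have hmin_a : forall p, tikhonov ipZ F Rb (u delta) (alpha delta) (ca delta, sa delta)
                        <= tikhonov ipZ F Rb (u delta) (alpha delta) p.
  by move=> [c s]; rewrite /F /Rb -!Jfun_tikhonov; exact: hcsa.
have hsrc : forall p, tikhonov ipZ F Rb (u delta) alpha_max p <= M ->
    prod_ip ipX ipY (xic, xis) ((cs, ss) - p)
    <= kappa1 * bregman (prod_ip ipX ipY) Rb (xic, xis) p (cs, ss)
       + kappa2 * ipnorm ipZ (F p - F (cs, ss)).
  move=> [c s]; rewrite /F /Rb -Jfun_tikhonov (mulrC nu1) (mulrC nu2) (mulrC nu3).
  exact: hsource.
have [D0 master] := fixed_level_estimate (prod_ip_sym sX sY) (prod_ip_lin lX lY)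
  sZ lZ pZ hxi (halpha _ hd) (hu _ hd) hmin_a (hM _ hd) hsrc.
exact: master_rates d0 hm (hasim _ hd) hk1 hk2 (sqrtr_ge0 _) D0 master.
Qed.
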